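(* For every triple of integers $0\le i<j<k$, the following seven elements of $\mathcal S$ belong to $\mathcal I$ (writing $\pi_{(a|b)}$ for hooks and $\pi_{(a_1,a_2|b_1,b_2)}$, $\pi_{(a_1,a_2,a_3|b_1,b_2,b_3)}$ for partitions of Frobenius rank 2, 3, and $\pi_{(\emptyset|\emptyset)}=\pi_\emptyset$): $\kappa_1=\pi_{\emptyset}(\pi_{(i|i)}\pi_{(k,j|k,j)}+\pi_{(j|k)}\pi_{(k,i|j,i)})-\pi_{(i|i)}\pi_{(j|j)}\pi_{(k|k)}+\pi_{(i|j)}\pi_{(j|k)}\pi_{(k|i)}$; $\kappa_2=\pi_{\emptyset}(\pi_{(j|j)}\pi_{(k,i|k,i)}-\pi_{(k|i)}\pi_{(j,i|k,j)})-\pi_{(i|i)}\pi_{(j|j)}\pi_{(k|k)}+\pi_{(i|j)}\pi_{(j|k)}\pi_{(k|i)}$; $\kappa_3=\pi_{\emptyset}(\pi_{(k|k)}\pi_{(j,i|j,i)}+\pi_{(i|j)}\pi_{(k,j|k,i)})-\pi_{(i|i)}\pi_{(j|j)}\pi_{(k|k)}+\pi_{(i|j)}\pi_{(j|k)}\pi_{(k|i)}$; $\kappa_1^T=\pi_{\emptyset}(\pi_{(i|i)}\pi_{(k,j|k,j)}+\pi_{(k|j)}\pi_{(j,i|k,i)})-\pi_{(i|i)}\pi_{(j|j)}\pi_{(k|k)}+\pi_{(j|i)}\pi_{(k|j)}\pi_{(i|k)}$; $\kappa_2^T=\pi_{\emptyset}(\pi_{(j|j)}\pi_{(k,i|k,i)}-\pi_{(i|k)}\pi_{(k,j|j,i)})-\pi_{(i|i)}\pi_{(j|j)}\pi_{(k|k)}+\pi_{(j|i)}\pi_{(k|j)}\pi_{(i|k)}$;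 $\kappa_3^T=\pi_{\emptyset}(\pi_{(k|k)}\pi_{(j,i|j,i)}+\pi_{(j|i)}\pi_{(k,i|k,j)})-\pi_{(i|i)}\pi_{(j|j)}\pi_{(k|k)}+\pi_{(j|i)}\pi_{(k|j)}\pi_{(i|k)}$; and, with $X:=\pi_{(i|j)}\pi_{(j|k)}\pi_{(k|i)}$, $\kappa_0=\pi_{\emptyset}^2\pi_{(k,j,i|k,j,i)}X-X^2+X\big(2\pi_{(i|i)}\pi_{(j|j)}\pi_{(k|k)}-\pi_{\emptyset}(\pi_{(i|i)}\pi_{(k,j|k,j)}+\pi_{(j|j)}\pi_{(k,i|k,i)}+\pi_{(k|k)}\pi_{(j,i|j,i)})\big)-(\pi_{(i|i)}\pi_{(j|j)}-\pi_{\emptyset}\pi_{(j,i|j,i)})(\pi_{(i|i)}\pi_{(k|k)}-\pi_{\emptyset}\pi_{(k,i|k,i)})(\pi_{(j|j)}\pi_{(k|k)}-\pi_{\emptyset}\pi_{(k,j|k,j)})$.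
   Context: Partitions and Frobenius notation: a partition $\lambda$ of Frobenius rank $r$ is written $\lambda=(a_1,\dots,a_r\mid b_1,\dots,b_r)$ with $a_1>\dots>a_r\ge 0$, $b_1>\dots>b_r\ge 0$, $a_i=\lambda_i-i$, $b_i=\lambda'_i-i$ ($\lambda'$ the conjugate partition); $\emptyset$ denotes the empty partition (rank $0$). Let $\mathcal S=\mathbb C[\pi_\lambda]$ be the polynomial ring in countably many indeterminates $\pi_\lambda$ indexed by all partitions $\lambda$. Plücker relations: for integers $0<k<N$ and a $k$-tuple $L=(L_1,\dots,L_k)$ of integers in $\{-k,\dots,N-k-1\}$ set $\tilde\pi_L:=\mathrm{sgn}(L)\,\pi_{\lambda(L)}$, where $\mathrm{sgn}(L)$ is the sign of the permutation sorting $L$ into increasing order ($\mathrm{sgn}(L):=0$ if $L$ has a repeated entry) and, if $L'_1<\dots<L'_k$ is the increasing rearrangement of $L$, $\lambda(L)$ is the partition with parts $\lambda_i=L'_{k-i+1}+i$, $i=1,\dots,k$. For a $(k-1)$-tuple $I$ and a $(k+1)$-tuple $J$ with entries in $\{-k,\dots,N-k-1\}$ the Plücker quadratic form is $p_{I,J}:=\sum_{j=1}^{k+1}(-1)^j\tilde\pi_{I_1,\dots,I_{k-1},J_j}\,\tilde\pi_{J_1,\dots,\widehat{J_j},\dots,J_{k+1}}\in\mathcal S$ (hat = omission). $\mathcal I\subset\mathcal S$ is the ideal generated by all $p_{I,J}$ for all $0<k<N$ and all such $I,J$. *)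

From HB Require Import structures.
From mathcomp Require Import all_boot all_order all_algebra.
From mathcomp Require Import Rstruct.
From mathcomp Require Import complex.
From mathcomp.multinomials Require Import monalg.

Set Implicit Arguments.
Unset Strict Implicit.
Unset Printing Implicit Defensive.

Import Order.TTheory GRing.Theory Num.Theory.
Local Open Scope ring_scope.

Definition is_part (s : seq nat) : bool :=
  sorted geq s && all (fun x => (0 < x)%N) s.

Record partition := Part { pval :> seq nat; _ : is_part pval }.
HB.instance Definition _ := [isSub for pval].
HB.instance Definition _ := [Equality of partition by <:].
HB.instance Definition _ := [Choice of partition by <:].

Definition empty_part : partition := @Part [::] isT.

(* coerce a sequence to a partition (only used on genuine partitions) *)
Definition mkpart (s : seq nat) : partition := insubd empty_part s.

(* Frobenius notation (a_1,...,a_r | b_1,...,b_r):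
   lambda_i = a_i + i for 1 <= i <= r, and for i > r,
   lambda_i = #{ j <= r : b_j + j >= i };  the length of lambda is b_1 + 1
   (and 0 when r = 0). *)
Definition frob_seq (a b : seq nat) : seq nat :=
  let r := size a in
  let l := if r == 0%N then 0%N else (nth 0%N b 0).+1 in
  [seq (if (i <= r)%N then (nth 0%N a i.-1 + i)%N
        else count (fun j => (i <= nth 0%N b j + j.+1)%N) (iota 0 r))
  | i <- iota 1 l].

Definition frob (a b : seq nat) : partition := mkpart (frob_seq a b).

Definition C : fieldType := Rdefinitions.R[i].
Definition S := {malg C[{cmonom partition}]}.

Definition pi (l : partition) : S := << ucm l >>.

Definition piF (a b : seq nat) : S := pi (frob a b).

Definition ninv (L : seq int) : nat :=
  \sum_(0 <= p < size L) \sum_(p.+1 <= q < size L)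
     (nth 0 L q < nth 0 L p)%R.

(* sign of the sorting permutation, 0 if an entry is repeated *)
Definition sgnL (L : seq int) : C :=
  if uniq L then (-1) ^+ ninv L else 0.

Definition lamL (L : seq int) : partition :=
  let dec := rev (sort (fun x y : int => x <= y) L) in
  mkpart (filter (fun x => (0 < x)%N)
    [seq absz (x.1 + (x.2.+1)%:Z) | x <- zip dec (iota 0 (size L))]).

Definition tpi (L : seq int) : S := sgnL L *: pi (lamL L).

Definition plucker (I J : seq int) : S :=
  \sum_(j < size J)
    (-1) ^+ j.+1 * tpi (rcons I (nth 0 J j)) * tpi (take j J ++ drop j.+1 J).

Definition in_range (k N : nat) (L : seq int) : bool :=
  all (fun x => (- (k%:Z) <= x) && (x <= N%:Z - k%:Z - 1)) L.

Definition plucker_gen (p : S) : Prop :=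
  exists (k N : nat) (I J : seq int),
    [/\ (0 < k < N)%N, size I = k.-1, size J = k.+1,
        in_range k N I && in_range k N J & p = plucker I J].

Definition in_ideal (gen : S -> Prop) (f : S) : Prop :=
  exists s : seq (S * S),
    (forall x, x \in s -> gen x.2) /\ f = \sum_(x <- s) x.1 * x.2.

Definition PluckerIdeal (f : S) : Prop := in_ideal plucker_gen f.

From Pilot Require Import Defs.
From HB Require Import structures.
From mathcomp Require Import all_boot all_order all_algebra.
From mathcomp.multinomials Require Import monalg.
From mathcomp Require Import ring zify.
Import Order.TTheory GRing.Theory Num.Theory.
Local Open Scope ring_scope.

Set Implicit Arguments.
Unset Strict Implicit.

(* The partition (a|b) corresponds to the set {a_i} u ({-1, ..., -m} \ {-(b_i + 1)}), its
   Maya diagram.  Taking the same set R of negative integers, with two (resp. three) holes,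
   as common part of I and J, the Plücker relation p_{I,J} becomes up to sign the
   Giambelli-type relation
     pi_0 pi_(a1,a2|b1,b2) = pi_(a1|b1) pi_(a2|b2) - pi_(a1|b2) pi_(a2|b1),
   resp. the first-row expansion of pi_0 pi_(a1,a2,a3|b1,b2,b3) into products
   pi_(a1|b_t) pi_(a2,a3|b without b_t).  Each kappa is a polynomial combination of
   these relations. *)

Section IdealClosure.
Variable gen : S -> Prop.

Lemma in_ideal_gen g : gen g -> in_ideal gen g.
Proof.
move=> gen_g; exists [:: (1, g)]; split; first by move=> x; rewrite inE => /eqP ->.
by rewrite big_seq1 mul1r.
Qed.

Lemma in_idealD f g : in_ideal gen f -> in_ideal gen g -> in_ideal gen (f + g).
Proof.
move=> [s [gen_s ->]] [t [gen_t ->]]; exists (s ++ t); split; last by rewrite big_cat.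
by move=> x; rewrite mem_cat => /orP[/gen_s|/gen_t].
Qed.

Lemma in_idealMl c f : in_ideal gen f -> in_ideal gen (c * f).
Proof.
move=> [s [gen_s ->]]; exists [seq (c * x.1, x.2) | x <- s]; split.
  by move=> _ /mapP[x sx ->]; apply: gen_s sx.
by rewrite big_map mulr_sumr; apply: eq_bigr => x _; rewrite mulrA.
Qed.

End IdealClosure.

(** * Plücker relations with a common prefix *)

Lemma scaler_signr n (x : S) : ((-1) ^+ n : C) *: x = (-1) ^+ n * x.
Proof. by rewrite -signr_odd scaler_sign -(signr_odd _ n) mulr_sign. Qed.

Lemma ninv_nil : ninv [::] = 0%N.
Proof. by rewrite /ninv big_geq. Qed.

Lemma sum_nth_count (P : pred int) (s : seq int) :
  (\sum_(0 <= q < size s) P (nth 0%R s q))%N = count P s.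
Proof.
elim: s => [|y s IHs] /=; first by rewrite big_geq.
by rewrite big_nat_recl //= IHs.
Qed.

Lemma ninv_cons x s : ninv (x :: s) = (count (fun y => (y < x)%R) s + ninv s)%N.
Proof.
rewrite /ninv /= big_nat_recl // big_add1 /= -sum_nth_count; congr (_ + _)%N.
by apply: eq_bigr => p _; rewrite big_add1.
Qed.

Definition above (R : seq int) (y : int) : nat := count (fun x => y < x) R.

Lemma ninv_cat R s :
  ninv (R ++ s) = (ninv R + ninv s + \sum_(y <- s) above R y)%N.
Proof.
elim: R => [|x R IHR] /=.
  by rewrite ninv_nil add0n big1 ?addn0.
rewrite !ninv_cons IHR /above count_cat big_split /=.
suff -> : (\sum_(y <- s) (y < x)%R)%N = count (fun y => (y < x)%R) s by ring.
by elim: s {IHR} => [|y s IHs]; rewrite ?big_nil ?big_cons ?IHs.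
Qed.

Lemma sgnL_cat R s : uniq R -> ~~ has (mem R) s ->
  sgnL (R ++ s) = (-1) ^+ (ninv R + \sum_(y <- s) above R y) * sgnL s.
Proof.
move=> uR dRs; rewrite /sgnL cat_uniq uR dRs ninv_cat /=.
by case: (uniq s); rewrite ?mulr0 // -exprD addnAC.
Qed.

(* [tpi_rel R s] is [tpi (R ++ s)] with the sign contributed by the common prefix [R] removed. *)
Definition tpi_rel (R s : seq int) : S := sgnL s *: Defs.pi (lamL (R ++ s)).

Lemma tpi_relE R s : uniq s -> tpi_rel R s = (-1) ^+ ninv s * Defs.pi (lamL (R ++ s)).
Proof. by move=> us; rewrite /tpi_rel /sgnL us scaler_signr. Qed.

Definition plucker_rel (R I J : seq int) : S :=
  \sum_(t < size J) (-1) ^+ t.+1 * tpi_rel R (rcons I (nth 0 J t))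
                                 * tpi_rel R (take t J ++ drop t.+1 J).

Lemma tpi_cat R s : uniq R -> ~~ has (mem R) s ->
  tpi (R ++ s) = (-1) ^+ (ninv R + \sum_(y <- s) above R y) * tpi_rel R s.
Proof. by move=> uR dRs; rewrite /tpi sgnL_cat // -scalerA scaler_signr. Qed.

Lemma perm_pluck (T : eqType) (x0 : T) (J : seq T) t : (t < size J)%N ->
  perm_eq (nth x0 J t :: take t J ++ drop t.+1 J) J.
Proof.
move=> tJ; rewrite -[X in perm_eq _ X](cat_take_drop t) (drop_nth x0 tJ).
by rewrite -cat1s perm_catCA.
Qed.

(* Stated with a left factor [c] so that it applies, through [eq_trans], to a summand of
   [plucker]: rewriting [*]-headed patterns in [S] is prohibitively slow. *)
Lemma tpi_cat_mul R I J t c : uniq R -> ~~ has (mem R) (I ++ J) -> (t < size J)%N ->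
  c * tpi (R ++ rcons I (nth 0 J t)) * tpi (R ++ (take t J ++ drop t.+1 J)) =
  c * (-1) ^+ (\sum_(y <- I ++ J) above R y)
    * tpi_rel R (rcons I (nth 0 J t)) * tpi_rel R (take t J ++ drop t.+1 J).
Proof.
move=> uR /hasPn dRIJ tJ; set J' := take t J ++ drop t.+1 J.
have pJ := perm_pluck 0 tJ.
have dR s : {subset s <= I ++ J} -> ~~ has (mem R) s.
  by move=> sIJ; apply/hasPn => x /sIJ /dRIJ.
have dI : ~~ has (mem R) (rcons I (nth 0 J t)).
  by apply: dR => x; rewrite mem_rcons inE mem_cat => /orP[/eqP->|->]; rewrite ?mem_nth ?orbT.
have dJ : ~~ has (mem R) J'.
  by apply: dR => x; rewrite !mem_cat => /orP[/mem_take|/mem_drop] ->; rewrite orbT.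
rewrite (tpi_cat uR dI) (tpi_cat uR dJ).
have -> : (\sum_(y <- I ++ J) above R y =
           \sum_(y <- rcons I (nth 0%R J t)) above R y + \sum_(y <- J') above R y)%N.
  by rewrite -big_cat cat_rcons; apply/perm_big; rewrite perm_cat2l perm_sym pJ.
(* The sign of [R] occurs in both factors and cancels. *)
have sgnR2 : (-1) ^+ ninv R * (-1) ^+ ninv R = 1 :> S.
  by rewrite -exprD addnn -signr_odd odd_double.
rewrite !exprD -[RHS]mul1r -[X in _ = X * _]sgnR2.
move: c (tpi_rel R _) (tpi_rel R J') ((-1) ^+ ninv R : S) ((-1) ^+ (\sum_(y <- J') above R y) : S).
by move: ((-1) ^+ (\sum_(y <- rcons I _) above R y) : S) => *; ring.
Qed.

Lemma plucker_cat R I J : uniq R -> ~~ has (mem R) (I ++ J) ->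
  plucker (R ++ I) (R ++ J) =
  (-1) ^+ (size R + \sum_(y <- I ++ J) above R y) * plucker_rel R I J.
Proof.
move=> uR dRIJ; rewrite /plucker /plucker_rel size_cat big_split_ord /=.
rewrite big1 ?add0r => [|t _]; last first.
  (* moving an entry of [R] creates a repetition *)
  rewrite nth_cat ltn_ord rcons_cat /tpi /sgnL cat_uniq uR /=.
  by rewrite has_rcons (mem_nth 0 (ltn_ord t)) scale0r mulr0 mul0r.
rewrite mulr_sumr; apply: eq_bigr => t _.
rewrite nth_cat ltnNge leq_addr /= addKn rcons_cat.
rewrite (takeD (size R)) -addnS (addnC (size R)) -drop_drop.
rewrite (take_size_cat _ (erefl (size R))) (drop_size_cat _ (erefl (size R))) -catA.
apply: (eq_trans (tpi_cat_mul _ uR dRIJ (ltn_ord t))); rewrite !exprD.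
by move: ((-1) ^+ _ : S) ((-1) ^+ _ : S) ((-1) ^+ _ : S) (tpi_rel _ _) (tpi_rel _ _) => *; ring.
Qed.

Lemma plucker_rel_in_ideal (k N : nat) R I J :
  (0 < k < N)%N -> size (R ++ I) = k.-1 -> size (R ++ J) = k.+1 ->
  in_range k N (R ++ I ++ J) -> uniq R -> ~~ has (mem R) (I ++ J) ->
  PluckerIdeal (plucker_rel R I J).
Proof.
move=> kN sRI sRJ range uR dR.
have gen : plucker_gen (plucker (R ++ I) (R ++ J)).
  exists k, N, (R ++ I), (R ++ J); split=> //.
  by move: range; rewrite /in_range !all_cat => /and3P[-> -> ->].
rewrite -[plucker_rel _ _ _](signrMK (size R + \sum_(y <- I ++ J) above R y)).
by rewrite -plucker_cat //; apply/in_idealMl/in_ideal_gen.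
Qed.

(** * Maya diagrams *)

Definition negiota (lo n : nat) : seq int := [seq - (x%:Z) | x <- iota lo n].

Lemma mem_negiota lo n x :
  (x \in negiota lo n) = (- (lo + n)%:Z < x <= - lo%:Z).
Proof.
apply/mapP/idP => [[y + ->]|x_in]; first by rewrite mem_iota; lia.
by exists `|x|%N; rewrite ?mem_iota; lia.
Qed.

Lemma size_negiota lo n : size (negiota lo n) = n.
Proof. by rewrite size_map size_iota. Qed.

Lemma uniq_negiota lo n : uniq (negiota lo n).
Proof. by rewrite map_inj_uniq ?iota_uniq // => x y /oppr_inj []. Qed.

Lemma gt_trans : transitive (>%R : rel int).
Proof. by move=> y x z /= yx zy; apply: lt_trans zy yx. Qed.

Lemma pairwise_negiota lo n : pairwise >%R (negiota lo n).
Proof.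
rewrite -(sorted_pairwise gt_trans) sorted_map.
by apply: sub_sorted (iota_ltn_sorted lo n) => x y /=; lia.
Qed.

(* The Maya diagram of the partition [(a|b)], truncated below [-m]: the [a_i], and
   -1, ..., -m except the -(b_i + 1).  The [lamL_*] lemmas show that [lamL] inverts it. *)
Definition maya (m : nat) (a b : seq nat) : seq int :=
  [seq x%:Z | x <- a] ++ [seq x <- negiota 1 m | x \notin [seq - (y.+1)%:Z | y <- b]].

Lemma mem_maya m a b x : (x \in maya m a b) =
  (x \in [seq y%:Z | y <- a]) || (- m%:Z <= x < 0) && (x \notin [seq - (y.+1)%:Z | y <- b]).
Proof. by rewrite mem_cat mem_filter mem_negiota andbC; congr (_ || (_ && _)); lia. Qed.

Lemma uniq_maya m a b : uniq a -> uniq (maya m a b).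
Proof.
move=> ua; rewrite cat_uniq map_inj_uniq ?filter_uniq ?uniq_negiota //; last first.
  by move=> x y [].
rewrite ua andbT; apply/hasPn => x; rewrite mem_filter mem_negiota => /andP[_ x_neg].
by apply/mapP => -[y _ x_nat]; move: x_neg; rewrite x_nat; lia.
Qed.

Lemma size_maya m a b : sorted gtn b -> all (fun y => y < m)%N b ->
  size (maya m a b) = (size a + (m - size b))%N.
Proof.
move=> /(sorted_uniq (rev_trans ltn_trans) ltnn) ub b_lt; rewrite size_cat size_map size_filter.
set B := [seq - (y.+1)%:Z | y <- b].
have uB : uniq B by rewrite map_inj_uniq // => x y /oppr_inj [].
have sub_B : {subset B <= negiota 1 m}.
  move=> _ /mapP[y yb ->]; rewrite mem_negiota.
  by move/allP: b_lt => /(_ y yb); lia.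
have count_B : count (mem B) (negiota 1 m) = size b.
  rewrite -size_filter -(size_map (fun y => - (y.+1)%:Z) b); apply: perm_size.
  apply: uniq_perm; rewrite ?filter_uniq ?uniq_negiota // => x.
  by rewrite mem_filter andb_idr // => /sub_B.
have e := count_predC (mem B) (negiota 1 m); rewrite count_B size_negiota in e.
by rewrite -{2}e addKn.
Qed.

Definition parts_from (p : nat) (D : seq int) : seq nat :=
  [seq absz (x.1 + (x.2.+1)%:Z) | x <- zip D (iota p (size D))].

Lemma parts_from_cons p x D :
  parts_from p (x :: D) = absz (x + (p.+1)%:Z) :: parts_from p.+1 D.
Proof. by []. Qed.

Lemma parts_from_cat p D1 D2 :
  parts_from p (D1 ++ D2) = parts_from p D1 ++ parts_from (p + size D1) D2.
Proof. by rewrite /parts_from size_cat iotaD zip_cat ?size_iota // map_cat. Qed.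

Lemma parts_from_negiota p lo n c : (lo + c = p.+1)%N ->
  parts_from p (negiota lo n) = nseq n c.
Proof.
elim: n lo p => [|n IHn] lo p lo_c //=.
by rewrite parts_from_cons IHn; [congr (_ :: _)|]; lia.
Qed.

Lemma lamL_sorted L D : uniq L -> L =i D -> sorted >%R D ->
  lamL L = mkpart [seq x <- parts_from 0 D | (0 < x)%N].
Proof.
move=> uL LD sD; have /lt_sorted_is_uniq_le/andP[uD sD'] : sorted <%R (rev D).
  by rewrite rev_sorted.
have LD' : perm_eq L (rev D).
  by apply: uniq_perm => // x; rewrite mem_rev.
rewrite /lamL /parts_from (perm_size LD') size_rev.
by rewrite (perm_sort_leP L (rev D) LD') (sort_le_id sD') revK.
Qed.

Lemma map_const_in (f : nat -> nat) c s :
  {in s, forall x, f x = c} -> map f s = nseq (size s) c.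
Proof.
elim: s => [|y s IHs] //= f_c; rewrite f_c ?mem_head // IHs // => x xs.
by apply: f_c; rewrite in_cons xs orbT.
Qed.

Ltac const_in c := rewrite (@map_const_in _ c) ?size_iota // => x;
  rewrite mem_iota => x_in /=; repeat case: leqP => ?; lia.

Lemma frob_hook a b : frob [:: a] [:: b] = mkpart ((a + 1)%N :: nseq b 1%N).
Proof. by rewrite /frob /frob_seq /=; congr (mkpart (_ :: _)); const_in 1%N. Qed.

Lemma frob_rank2 a1 a2 b1 b2 : (b2 < b1)%N ->
  frob [:: a1; a2] [:: b1; b2] =
  mkpart ([:: (a1 + 1)%N; (a2 + 2)%N] ++ nseq b2 2%N ++ nseq (b1 - b2.+1) 1%N).
Proof.
move=> b21; rewrite /frob /frob_seq /=.
rewrite (_ : iota 2 b1 = iota 2 (1 + b2 + (b1 - b2.+1))); last by congr iota; lia.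
rewrite !iotaD !map_cat /=; congr (mkpart (_ :: _ :: _ ++ _)).
- by const_in 2%N.
- by const_in 1%N.
Qed.

Lemma frob_rank3 a1 a2 a3 b1 b2 b3 : (b3 < b2)%N -> (b2 < b1)%N ->
  frob [:: a1; a2; a3] [:: b1; b2; b3] =
  mkpart ([:: (a1 + 1)%N; (a2 + 2)%N; (a3 + 3)%N] ++ nseq b3 3%N
          ++ nseq (b2 - b3.+1) 2%N ++ nseq (b1 - b2.+1) 1%N).
Proof.
move=> b32 b21; rewrite /frob /frob_seq /=.
rewrite (_ : iota 2 b1 = iota 2 (1 + 1 + b3 + (b2 - b3.+1) + (b1 - b2.+1))).
  rewrite !iotaD !map_cat /= -!catA; congr (mkpart (_ :: _ :: _ :: _ ++ _ ++ _)).
  - by const_in 3%N.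
  - by const_in 2%N.
  - by const_in 1%N.
by congr iota; lia.
Qed.

Ltac sorted_gt := rewrite (sorted_pairwise gt_trans) /= ?pairwise_cat ?pairwise_negiota;
  repeat (apply/andP; split); first [ by [] | lia
  | apply/allP => x /=; rewrite ?inE ?mem_cat ?mem_negiota; lia
  | apply/allrelP => x y /=; rewrite ?mem_cat ?mem_negiota; lia ].

Ltac mem_lia := rewrite ?mem_maya /= ?inE ?mem_cat ?mem_negiota; lia.

Lemma lamL_rank0 m L : uniq L -> L =i maya m [::] [::] -> lamL L = frob [::] [::].
Proof.
move=> uL mL; rewrite (@lamL_sorted L (negiota 1 m) uL);
  [|by move=> x; rewrite mL; mem_lia|by sorted_gt].
by rewrite (@parts_from_negiota _ _ _ 0) // filter_nseq.
Qed.

Lemma lamL_hook a b m L : (b < m)%N ->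
  uniq L -> L =i maya m [:: a] [:: b] -> lamL L = frob [:: a] [:: b].
Proof.
move=> bm uL mL.
rewrite (@lamL_sorted L (a%:Z :: negiota 1 b ++ negiota b.+2 (m - b.+1)) uL);
  [|by move=> x; rewrite mL; mem_lia|by sorted_gt].
rewrite frob_hook parts_from_cons parts_from_cat size_negiota.
rewrite (@parts_from_negiota _ _ _ 1) // (@parts_from_negiota _ _ _ 0); last lia.
by rewrite -PoszD /= filter_cat !filter_nseq /= addn1 mul1n cats0.
Qed.

Lemma lamL_rank2 a1 a2 b1 b2 m L : (a2 < a1)%N -> (b2 < b1)%N -> (b1 < m)%N ->
  uniq L -> L =i maya m [:: a1; a2] [:: b1; b2] ->
  lamL L = frob [:: a1; a2] [:: b1; b2].
Proof.
move=> a21 b21 b1m uL mL.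
rewrite (@lamL_sorted L (a1%:Z :: a2%:Z :: negiota 1 b2
    ++ negiota b2.+2 (b1 - b2.+1) ++ negiota b1.+2 (m - b1.+1)) uL);
  [|by move=> x; rewrite mL; mem_lia|by sorted_gt].
rewrite frob_rank2 // !parts_from_cons !parts_from_cat !size_negiota.
rewrite (@parts_from_negiota _ _ _ 2) // (@parts_from_negiota _ _ _ 1); last lia.
rewrite (@parts_from_negiota _ _ _ 0); last lia.
by rewrite -!PoszD /= !filter_cat !filter_nseq /= !mul1n cats0 addn1 addn2.
Qed.

Lemma lamL_rank3 a1 a2 a3 b1 b2 b3 m L :
  (a3 < a2)%N -> (a2 < a1)%N -> (b3 < b2)%N -> (b2 < b1)%N -> (b1 < m)%N ->
  uniq L -> L =i maya m [:: a1; a2; a3] [:: b1; b2; b3] ->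
  lamL L = frob [:: a1; a2; a3] [:: b1; b2; b3].
Proof.
move=> a32 a21 b32 b21 b1m uL mL.
rewrite (@lamL_sorted L (a1%:Z :: a2%:Z :: a3%:Z :: negiota 1 b3
    ++ negiota b3.+2 (b2 - b3.+1) ++ negiota b2.+2 (b1 - b2.+1)
    ++ negiota b1.+2 (m - b1.+1)) uL);
  [|by move=> x; rewrite mL; mem_lia|by sorted_gt].
rewrite frob_rank3 // !parts_from_cons !parts_from_cat !size_negiota.
rewrite (@parts_from_negiota _ _ _ 3) // (@parts_from_negiota _ _ _ 2); last lia.
rewrite (@parts_from_negiota _ _ _ 1); last lia.
rewrite (@parts_from_negiota _ _ _ 0); last lia.
by rewrite -!PoszD /= !filter_cat !filter_nseq /= !mul1n cats0 addn1 addn2 addn3.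
Qed.

(** * The rank-2 and rank-3 relations *)

Lemma plucker_maya_in_ideal m b (I J : seq int) (top : nat) :
  sorted gtn b -> all (fun y => y < m)%N b -> (size b <= m)%N ->
  (size I).+1 = size b -> size J = (size b).+1 ->
  all (fun x => - m%:Z <= x <= top%:Z) (I ++ J) ->
  ~~ has (mem (maya m [::] b)) (I ++ J) ->
  PluckerIdeal (plucker_rel (maya m [::] b) I J).
Proof.
move=> sb b_lt bm sI sJ IJ_range dIJ.
(* With k = m and N = m + top + 1 the window [-k, N - k - 1] is [-m, top]. *)
apply: (@plucker_rel_in_ideal m (m + top).+1).
- lia.
- by rewrite size_cat size_maya //=; lia.
- by rewrite size_cat size_maya //=; lia.
- apply/allP => x; rewrite mem_cat mem_maya /=.
  by case/orP => [/andP[x_neg _]|/(allP IJ_range)]; lia.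
- exact: uniq_maya.
- exact: dIJ.
Qed.

Ltac decide_int_tests := repeat match goal with
  | |- context [(?x < ?y)%R] =>
      first [rewrite (_ : (x < y)%R = true); last by lia
            | rewrite (_ : (x < y)%R = false); last by lia]
  end.

(* The atoms [Defs.pi _] are generalized first, since [ring] would compare them up to
   conversion. *)
Ltac ring_pi := rewrite /piF; repeat match goal with
  | |- context [Defs.pi ?l] => let x := fresh "x" in move: (Defs.pi l) => x
  end; ring.

Ltac maya_side := first [ lia | by move=> /=; lia
  | by apply/allP => x; rewrite /= !inE; lia
  | by rewrite /= !mem_maya /= !inE; lia
  | by rewrite cat_uniq uniq_maya //= !mem_maya /= !inE; lia
  | by move=> x; rewrite mem_cat !mem_maya /= !inE; lia ].

Ltac lamL_maya m := first [ apply: (@lamL_rank0 m) | apply: (@lamL_hook _ _ m)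
  | apply: (@lamL_rank2 _ _ _ _ m) | apply: (@lamL_rank3 _ _ _ _ _ _ m) ]; maya_side.

Section Rank2.
Variables a1 a2 b1 b2 : nat.
Hypotheses (a21 : (a2 < a1)%N) (b21 : (b2 < b1)%N).
Local Notation R := (maya b1.+1 [::] [:: b1; b2]).
Local Notation B1 := (- (b1.+1)%:Z).
Local Notation B2 := (- (b2.+1)%:Z).

Lemma plucker_rank2 :
  PluckerIdeal (piF [::] [::] * piF [:: a1; a2] [:: b1; b2]
                - piF [:: a1] [:: b1] * piF [:: a2] [:: b2]
                + piF [:: a1] [:: b2] * piF [:: a2] [:: b1]).
Proof.
have : PluckerIdeal (plucker_rel R [:: a2%:Z] [:: B1; B2; a1%:Z]).
  by apply: (plucker_maya_in_ideal (top := a1)); maya_side.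
have e1 : lamL (R ++ [:: a2%:Z; B1]) = frob [:: a2] [:: b2] by lamL_maya b1.+1.
have e2 : lamL (R ++ [:: B2; a1%:Z]) = frob [:: a1] [:: b1] by lamL_maya b1.+1.
have e3 : lamL (R ++ [:: a2%:Z; B2]) = frob [:: a2] [:: b1] by lamL_maya b1.+1.
have e4 : lamL (R ++ [:: B1; a1%:Z]) = frob [:: a1] [:: b2] by lamL_maya b1.+1.
have e5 : lamL (R ++ [:: a2%:Z; a1%:Z]) = frob [:: a1; a2] [:: b1; b2] by lamL_maya b1.+1.
have e6 : lamL (R ++ [:: B1; B2]) = frob [::] [::] by lamL_maya b1.+1.
rewrite /plucker_rel !big_ord_recl big_ord0 /= !tpi_relE; try by rewrite /= ?inE; lia.
rewrite !ninv_cons ninv_nil /=; decide_int_tests.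
rewrite e1 e2 e3 e4 e5 e6 /bump /= !addn0 => /(@in_idealMl _ (-1)) ideal.
by apply: (eq_ind _ PluckerIdeal ideal); ring_pi.
Qed.

End Rank2.

Section Rank3.
Variables a1 a2 a3 b1 b2 b3 : nat.
Hypotheses (a32 : (a3 < a2)%N) (a21 : (a2 < a1)%N).
Hypotheses (b32 : (b3 < b2)%N) (b21 : (b2 < b1)%N).
Local Notation R := (maya b1.+1 [::] [:: b1; b2; b3]).
Local Notation B1 := (- (b1.+1)%:Z).
Local Notation B2 := (- (b2.+1)%:Z).
Local Notation B3 := (- (b3.+1)%:Z).

Lemma plucker_rank3 :
  PluckerIdeal (piF [::] [::] * piF [:: a1; a2; a3] [:: b1; b2; b3]
                - piF [:: a1] [:: b1] * piF [:: a2; a3] [:: b2; b3]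
                + piF [:: a1] [:: b2] * piF [:: a2; a3] [:: b1; b3]
                - piF [:: a1] [:: b3] * piF [:: a2; a3] [:: b1; b2]).
Proof.
have : PluckerIdeal (plucker_rel R [:: a3%:Z; a2%:Z] [:: B1; B2; B3; a1%:Z]).
  by apply: (plucker_maya_in_ideal (top := a1)); maya_side.
have e1 : lamL (R ++ [:: a3%:Z; a2%:Z; B1]) = frob [:: a2; a3] [:: b2; b3] by lamL_maya b1.+1.
have e2 : lamL (R ++ [:: B2; B3; a1%:Z]) = frob [:: a1] [:: b1] by lamL_maya b1.+1.
have e3 : lamL (R ++ [:: a3%:Z; a2%:Z; B2]) = frob [:: a2; a3] [:: b1; b3] by lamL_maya b1.+1.
have e4 : lamL (R ++ [:: B1; B3; a1%:Z]) = frob [:: a1] [:: b2] by lamL_maya b1.+1.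
have e5 : lamL (R ++ [:: a3%:Z; a2%:Z; B3]) = frob [:: a2; a3] [:: b1; b2] by lamL_maya b1.+1.
have e6 : lamL (R ++ [:: B1; B2; a1%:Z]) = frob [:: a1] [:: b3] by lamL_maya b1.+1.
have e7 : lamL (R ++ [:: a3%:Z; a2%:Z; a1%:Z]) = frob [:: a1; a2; a3] [:: b1; b2; b3].
  by lamL_maya b1.+1.
have e8 : lamL (R ++ [:: B1; B2; B3]) = frob [::] [::] by lamL_maya b1.+1.
rewrite /plucker_rel !big_ord_recl big_ord0 /= !tpi_relE; try by rewrite /= ?inE; lia.
rewrite !ninv_cons ninv_nil /=; decide_int_tests.
rewrite e1 e2 e3 e4 e5 e6 e7 e8 /bump /= !addn0 => ideal.
by apply: (eq_ind _ PluckerIdeal ideal); ring_pi.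
Qed.

End Rank3.

(** * The relations kappa *)

Section KappaRelations.
Variables (R : comRingType) (P : R -> Prop).
Hypothesis P_add : forall {x y}, P x -> P y -> P (x + y).
Hypothesis P_mull : forall c {x}, P x -> P (c * x).
Variables (p0 r3 : R) (h : nat -> nat -> R) (r2 : nat -> nat -> nat -> nat -> R).
Variables (i j k : nat).
Hypotheses (ltij : (i < j)%N) (ltjk : (j < k)%N).

Local Notation G a1 a2 b1 b2 :=
  (p0 * r2 a1 a2 b1 b2 - h a1 b1 * h a2 b2 + h a1 b2 * h a2 b1).
Hypothesis rank2 : forall {a1 a2 b1 b2}, (a2 < a1)%N -> (b2 < b1)%N -> P (G a1 a2 b1 b2).
Hypothesis rank3 :
  P (p0 * r3 - h k k * r2 j i j i + h k j * r2 j i k i - h k i * r2 j i k j).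

Local Notation X := (h i j * h j k * h k i).
Local Notation XT := (h j i * h k j * h i k).
Local Notation D := (h i i * h j j * h k k).
Local Notation minor a b := (h a a * h b b - p0 * r2 b a b a).

Let ltik : (i < k)%N := ltn_trans ltij ltjk.

Lemma kappa1 : P (p0 * (h i i * r2 k j k j + h j k * r2 k i j i) - D + X).
Proof.
apply: (eq_ind _ P (P_add (P_mull (h i i) (rank2 ltjk ltjk))
                          (P_mull (h j k) (rank2 ltik ltij)))); ring.
Qed.

Lemma kappa2 : P (p0 * (h j j * r2 k i k i - h k i * r2 j i k j) - D + X).
Proof.
apply: (eq_ind _ P (P_add (P_mull (h j j) (rank2 ltik ltik))
                          (P_mull (- h k i) (rank2 ltij ltjk)))); ring.
Qed.

Lemma kappa3 : P (p0 * (h k k * r2 j i j i + h i j * r2 k j k i) - D + X).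
Proof.
apply: (eq_ind _ P (P_add (P_mull (h k k) (rank2 ltij ltij))
                          (P_mull (h i j) (rank2 ltjk ltik)))); ring.
Qed.

Lemma kappa1T : P (p0 * (h i i * r2 k j k j + h k j * r2 j i k i) - D + XT).
Proof.
apply: (eq_ind _ P (P_add (P_mull (h i i) (rank2 ltjk ltjk))
                          (P_mull (h k j) (rank2 ltij ltik)))); ring.
Qed.

Lemma kappa2T : P (p0 * (h j j * r2 k i k i - h i k * r2 k j j i) - D + XT).
Proof.
apply: (eq_ind _ P (P_add (P_mull (h j j) (rank2 ltik ltik))
                          (P_mull (- h i k) (rank2 ltjk ltij)))); ring.
Qed.

Lemma kappa3T : P (p0 * (h k k * r2 j i j i + h j i * r2 k i k j) - D + XT).
Proof.
apply: (eq_ind _ P (P_add (P_mull (h k k) (rank2 ltij ltij))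
                          (P_mull (h j i) (rank2 ltik ltjk)))); ring.
Qed.

(* Modulo [P], [minor a b = h a b * h b a], and by [rank3]
   [p0 ^+ 2 * r3 - p0 * (h i i * r2 k j k j + h j j * r2 k i k i + h k k * r2 j i j i)
    = X + XT - 2 D]; hence [kappa0 = X (X + XT) - X ^+ 2 - X XT = 0]. *)
Lemma kappa0 :
  P (p0 ^+ 2 * r3 * X - X ^+ 2
     + X * (2%:R * D - p0 * (h i i * r2 k j k j + h j j * r2 k i k i + h k k * r2 j i j i))
     - minor i j * minor i k * minor j k).
Proof.
have Gjiji := rank2 ltij ltij; have Gkiki := rank2 ltik ltik.
have Gkjkj := rank2 ltjk ltjk; have Gjiki := rank2 ltij ltik.
have Gjikj := rank2 ltij ltjk.
apply: (eq_ind _ P (P_add (P_mull (p0 * X) rank3)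
  (P_add (P_mull (- (X * h k j)) Gjiki) (P_add (P_mull (X * h k i) Gjikj)
  (P_add (P_mull (- (X * h i i)) Gkjkj) (P_add (P_mull (- (X * h j j)) Gkiki)
  (P_add (P_mull (minor i k * minor j k) Gjiji)
  (P_add (P_mull (h j i * h i j * minor j k) Gkiki)
         (P_mull (h j i * h i j * (h k i * h i k)) Gkjkj))))))))).
ring.
Qed.

End KappaRelations.

Theorem mainTheorem9 (i j k : nat) : (i < j < k)%N ->
  let p0 := piF [::] [::] in
  let h a b := piF [:: a] [:: b] in
  let r2 a1 a2 b1 b2 := piF [:: a1; a2] [:: b1; b2] in
  let X := h i j * h j k * h k i in
  let XT := h j i * h k j * h i k in
  let D := h i i * h j j * h k k in
  PluckerIdeal
        (p0 * (h i i * r2 k j k j + h j k * r2 k i j i) - D + X)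
  /\ PluckerIdeal
        (p0 * (h j j * r2 k i k i - h k i * r2 j i k j) - D + X)
  /\ PluckerIdeal
        (p0 * (h k k * r2 j i j i + h i j * r2 k j k i) - D + X)
  /\ PluckerIdeal
        (p0 * (h i i * r2 k j k j + h k j * r2 j i k i) - D + XT)
  /\ PluckerIdeal
        (p0 * (h j j * r2 k i k i - h i k * r2 k j j i) - D + XT)
  /\ PluckerIdeal
        (p0 * (h k k * r2 j i j i + h j i * r2 k i k j) - D + XT)
  /\ PluckerIdeal
        (p0 ^+ 2 * piF [:: k; j; i] [:: k; j; i] * X - X ^+ 2
         + X * (2%:R * D - p0 * (h i i * r2 k j k j + h j j * r2 k i k i
                                 + h k k * r2 j i j i))
         - (h i i * h j j - p0 * r2 j i j i)
           * (h i i * h k k - p0 * r2 k i k i)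
           * (h j j * h k k - p0 * r2 k j k j)).
Proof.
move=> /andP[ltij ltjk] p0 h r2 X XT D.
have rank3 := plucker_rank3 ltij ltjk ltij ltjk.
have Padd := @in_idealD plucker_gen; have Pmul := @in_idealMl plucker_gen.
do !split.
- exact (kappa1 Padd Pmul ltij ltjk plucker_rank2).
- exact (kappa2 Padd Pmul ltij ltjk plucker_rank2).
- exact (kappa3 Padd Pmul ltij ltjk plucker_rank2).
- exact (kappa1T Padd Pmul ltij ltjk plucker_rank2).
- exact (kappa2T Padd Pmul ltij ltjk plucker_rank2).
- exact (kappa3T Padd Pmul ltij ltjk plucker_rank2).
- exact (kappa0 Padd Pmul ltij ltjk plucker_rank2 rank3).
Qed.
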